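(* Without the moment bound constraint $\int\|\mathbf{x}\|_2^d\,\mathrm{d}\mu\le M$, an optimization problem of option-pricing type over probability measures need not attain its optimal value. Specifically, for real numbers $0 \le k_1 < k_2$ and $a > 0$, the problem \[ p^\ast = \inf\Big\{\int_0^\infty \max(0,x-k_1)\,\mathrm{d}\mu(x) \;:\; \mu \text{ a Borel probability measure on } [0,\infty),\ \int_0^\infty \max(0,x-k_2)\,\mathrm{d}\mu(x) = a\Big\} \] is feasible, but there is no feasible probability measure $\mu$ attaining the infimum $p^\ast$. *)

From HB Require Import structures.
From mathcomp Require Import all_boot all_order all_algebra.
From mathcomp Require Import all_classical all_reals all_analysis.
Set Implicit Arguments. Unset Strict Implicit. Unset Printing Implicit Defensive.
Import Order.TTheory GRing.Theory Num.Theory.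
Local Open Scope classical_set_scope.
Local Open Scope ring_scope.

Definition payoff (R : realType) (k x : R) : R := Num.max 0 (x - k).

(* Borel probability measures on [0, oo) are represented as Borel probability
   measures on R giving full mass to [0, oo). *)
Definition supported_nonneg (R : realType) (mu : probability R R) : Prop :=
  mu `[0%R, +oo[%classic = 1%E.

Definition feasible (R : realType) (k2 a : R) (mu : probability R R) : Prop :=
  supported_nonneg mu /\
  (\int[mu]_(x in `[0%R, +oo[%classic) (payoff k2 x)%:E = a%:E)%E.

Definition objective (R : realType) (k1 : R) (mu : probability R R) : \bar R :=
  (\int[mu]_(x in `[0%R, +oo[%classic) (payoff k1 x)%:E)%E.

Definition opt_value (R : realType) (k1 k2 a : R) : \bar R :=
  ereal_inf [set v | exists mu : probability R R, feasible k2 a mu /\ v = objective k1 mu].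

From HB Require Import structures.
From mathcomp Require Import all_boot all_order all_algebra.
From mathcomp Require Import all_classical all_reals all_analysis.
From mathcomp Require Import measurable_realfun ring lra.
Set Implicit Arguments. Unset Strict Implicit. Unset Printing Implicit Defensive.
Import Order.TTheory GRing.Theory Num.Theory.
Local Open Scope ring_scope.
Local Open Scope classical_set_scope.

Local Notation nonneg := `[0%R, +oo[%classic.

(* The measures mu_t := t delta_(k2 + a/t) + (1 - t) delta_0, for 0 < t <= 1, are
   feasible with objective a + t (k2 - k1), so p^* <= a + t (k2 - k1) for all such t.
   Conversely (x - k1)^+ >= (x - k2)^+ + (k2 - k1) 1_(x > k2), so a feasible mu has
   objective at least a + (k2 - k1) mu(]k2, oo[), and mu(]k2, oo[) > 0 since the
   constraint integral a is positive.  Taking t := mu(]k2, oo[) / 2 shows that no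
   feasible objective reaches p^*. *)

Section two_point.
Context (R : realType) (x y : R).

Definition two_point (b : bool) : R := if b then x else y.

Lemma measurable_two_point : measurable_fun [set: bool] two_point.
Proof. by []. Qed.

HB.instance Definition _ :=
  isMeasurableFun.Build _ _ bool R two_point measurable_two_point.

Variables (t : R) (t01 : 0 <= t <= 1).

Local Notation P := (distribution (bernoulli_prob t) two_point).

Lemma two_point_full (D : set R) : D x -> D y -> P D = 1%E.
Proof.
move=> Dx Dy; rewrite /distribution /pushforward.
suff -> : two_point @^-1` D = setT by rewrite probability_setT.
by apply/seteqP; split => // -[].
Qed.

Lemma ge0_integral_two_point (D : set R) (f : R -> \bar R) :
  measurable D -> measurable_fun D f -> (forall z, D z -> (0 <= f z)%E) ->
  D x -> D y ->
  (\int[P]_(z in D) f z = t%:E * f x + (1 - t)%:E * f y)%E.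
Proof.
move=> mD mf f0 Dx Dy.
have f0D z : (0 <= (f \_ D) z)%E by rewrite patchE; case: ifPn => // /set_mem /f0.
rewrite integral_mkcond ge0_integral_distribution //; last exact/(measurable_restrictT _ mD).
by rewrite integral_bernoulli_prob //= !patchE !mem_set.
Qed.

End two_point.

Section payoff.
Context (R : realType).
Implicit Types k x : R.

Lemma payoff_ge0 k x : 0 <= payoff k x.
Proof. by rewrite /payoff le_max lexx. Qed.

Lemma payoff_eq0 k x : x <= k -> payoff k x = 0.
Proof. by move=> xk; apply/max_idPl; rewrite subr_le0. Qed.

Lemma payoffE k x : k <= x -> payoff k x = x - k.
Proof. by move=> kx; apply/max_idPr; rewrite subr_ge0. Qed.

Lemma measurable_payoff k (D : set R) : measurable_fun D (fun x => (payoff k x)%:E).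
Proof.
apply/measurable_EFinP/measurable_funTS.
by apply: measurable_maxr => //; apply: measurable_funB.
Qed.

Lemma payoff_le_spread k1 k2 x : k1 <= k2 ->
  payoff k2 x + (k2 - k1) * \1_`]k2, +oo[ x <= payoff k1 x.
Proof.
move=> k12; rewrite indicE; have [k2x|xk2] := ltP k2 x.
  rewrite mem_set/=; last by rewrite in_itv/= k2x.
  rewrite mulr1 !payoffE ?(ltW k2x) ?(le_trans k12 (ltW k2x)) //.
  by rewrite addrA subrK.
rewrite memNset/=; last by rewrite in_itv/= ltNge xk2.
by rewrite mulr0 addr0 payoff_eq0 // payoff_ge0.
Qed.

Lemma payoff_restrict k :
  (fun x => (payoff k x)%:E) \_ `]k, +oo[ = (fun x => (payoff k x)%:E).
Proof.
apply/funext => x; rewrite patchE; case: ifPn => // /negP.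
by rewrite in_setE/= in_itv/= andbT => /negP; rewrite -leNgt => /payoff_eq0 ->.
Qed.

End payoff.

Section integral_payoff.
Context (R : realType) (mu : {measure set R -> \bar R}) (D : set R).
Hypothesis mD : measurable D.
Local Open Scope ereal_scope.

Lemma integral_payoff_eq0 k : mu (`]k, +oo[ `&` D) = 0 ->
  \int[mu]_(x in D) (payoff k x)%:E = 0.
Proof.
move=> null; rewrite -payoff_restrict -integral_mkcondl.
by apply: null_set_integral => //; [exact: measurableI | exact: measurable_payoff].
Qed.

Lemma integral_payoff_le_spread k1 k2 : (k1 <= k2)%R ->
  \int[mu]_(x in D) (payoff k2 x)%:E + (k2 - k1)%:E * mu (`]k2, +oo[ `&` D)
    <= \int[mu]_(x in D) (payoff k1 x)%:E.
Proof.
move=> k12; have k21_ge0 : 0 <= (k2 - k1)%:E by rewrite lee_fin subr_ge0.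
have payoff_ge0 k x : 0 <= (payoff k x)%:E by rewrite lee_fin payoff_ge0.
have mpayoff k := @measurable_payoff R k D.
have ind_ge0 x : 0 <= (\1_`]k2, +oo[ x : R)%:E by rewrite lee_fin indicE ler0n.
have mind : measurable_fun D (fun x => (\1_`]k2, +oo[ x : R)%:E).
  apply/measurable_EFinP/measurable_funTS.
  by apply: measurable_indic; exact: measurable_itv.
rewrite -integral_indic ?measurable_itv // -ge0_integralZl // -ge0_integralD //.
- apply: ge0_le_integral => //.
  + by move=> x _; rewrite adde_ge0 ?mule_ge0.
  + by apply: emeasurable_funD => //; exact: measurable_funeM.
  by move=> x _; rewrite -EFinM -EFinD lee_fin payoff_le_spread.
- by move=> x _; rewrite mule_ge0.
exact: measurable_funeM.
Qed.

End integral_payoff.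

Section minimizing_measure.
Context (R : realType) (k2 a t : R).
Hypotheses (k2_ge0 : 0 <= k2) (a_ge0 : 0 <= a) (t_gt0 : 0 < t) (t_le1 : t <= 1).

Definition minimizing_measure : probability R R :=
  distribution (bernoulli_prob t) (two_point (k2 + a / t) 0).

Let t01 : 0 <= t <= 1. Proof. by rewrite ltW. Qed.

Let atom_nonneg : nonneg (k2 + a / t).
Proof. by rewrite /= in_itv /= andbT addr_ge0 // divr_ge0 // ltW. Qed.

Let zero_nonneg : nonneg (0 : R).
Proof. by rewrite /= in_itv /= lexx. Qed.

Lemma integral_payoff_minimizing k : 0 <= k <= k2 ->
  (\int[minimizing_measure]_(x in nonneg) (payoff k x)%:E = (a + t * (k2 - k))%:E)%E.
Proof.
move=> /andP[k_ge0 k_le2].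
rewrite ge0_integral_two_point //; last 2 first.
- exact: measurable_payoff.
- by move=> x _; rewrite lee_fin payoff_ge0.
rewrite [payoff k 0]payoff_eq0 // payoffE; last by rewrite -[k]addr0 lerD // divr_ge0 // ltW.
by rewrite -!EFinM -EFinD; congr (_%:E); field; rewrite gt_eqF.
Qed.

Lemma minimizing_measure_feasible : feasible k2 a minimizing_measure.
Proof.
split; first exact: two_point_full.
by rewrite integral_payoff_minimizing ?k2_ge0 ?lexx // subrr mulr0 addr0.
Qed.

End minimizing_measure.

Lemma opt_value_le (R : realType) (k1 k2 a t : R) :
  0 <= k1 -> k1 <= k2 -> 0 <= a -> 0 < t <= 1 ->
  (opt_value k1 k2 a <= (a + t * (k2 - k1))%:E)%E.
Proof.
move=> k1_ge0 k12 a_ge0 /andP[t_gt0 t_le1].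
have k2_ge0 := le_trans k1_ge0 k12.
apply: ereal_inf_lbound; exists (minimizing_measure k2 a t); split.
  exact: minimizing_measure_feasible.
by rewrite /objective integral_payoff_minimizing ?k1_ge0.
Qed.

Lemma feasible_objective_gt (R : realType) (k1 k2 a : R) (mu : probability R R) :
  k1 < k2 -> 0 < a -> feasible k2 a mu ->
  exists2 t, 0 < t <= 1 & ((a + t * (k2 - k1))%:E < objective k1 mu)%E.
Proof.
move=> k12 a_gt0 [_ mu_k2].
have mnonneg : measurable (nonneg : set R) by exact: measurable_itv.
have mS : measurable (`]k2, +oo[ `&` nonneg) by apply: measurableI.
have := integral_payoff_le_spread mu mnonneg (ltW k12).
rewrite mu_k2 -/(objective k1 mu); set m := (X in (_ * X)%E) => lower.
have /andP[m_gt0 m_le1] : (0 < m <= 1)%E.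
  rewrite lt0e measure_ge0 probability_le1 // !andbT.
  apply/eqP => /(integral_payoff_eq0 mnonneg).
  by rewrite mu_k2 => /eqP; rewrite eqe gt_eqF.
have m_fin : m \is a fin_num by rewrite ge0_fin_numE ?ltW // (le_lt_trans m_le1) ?ltey.
move: m_gt0 m_le1 lower; rewrite -(fineK m_fin) lte_fin lee_fin -EFinM -EFinD.
set s := fine m => s_gt0 s_le1 lower.
exists (s / 2); first by apply/andP; split; lra.
apply: lt_le_trans lower; rewrite lte_fin ltrD2l.
have : 0 < k2 - k1 by rewrite subr_gt0.
nra.
Qed.

Theorem proposition1 (R : realType) (k1 k2 a : R) :
  0 <= k1 -> k1 < k2 -> 0 < a ->
  (exists mu : probability R R, feasible k2 a mu) /\
  ~ (exists mu : probability R R,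
        feasible k2 a mu /\ objective k1 mu = opt_value k1 k2 a).
Proof.
move=> k1_ge0 k12 a_gt0.
have k2_ge0 := le_trans k1_ge0 (ltW k12).
split.
  exists (minimizing_measure k2 a 1).
  exact: minimizing_measure_feasible k2_ge0 (ltW a_gt0) ltr01 (lexx 1).
move=> [mu [mu_feasible mu_opt]].
have [t t01 obj_gt] := feasible_objective_gt k12 a_gt0 mu_feasible.
have := opt_value_le k1_ge0 (ltW k12) (ltW a_gt0) t01.
by rewrite -mu_opt leNgt obj_gt.
Qed.
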